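(* Let $M$ be a monoid with zero and let $I$ be an rf-compatible ideal of $M$ such that $N=(M\setminus I)\cup\{0\}$ is a submonoid of $M$. Then $M$ is residually finite if and only if $N$ is residually finite.
   Context: An ideal $I$ of a monoid $M$ is rf-compatible with $M$ if for any two distinct $s,t\in I$ there is a congruence $\rho$ of finite index on the semigroup $I$ with $s/\rho\neq t/\rho$ such that $\rho\cup\Delta_M$ is a congruence on $M$, where $\Delta_M=\{(x,x):x\in M\}$. A monoid is residually finite if distinct elements are separated by homomorphisms to finite monoids. *)

From Stdlib Require Import List.

Set Implicit Arguments.

Record monoid := Monoid {
  mcar :> Type;
  mmul : mcar -> mcar -> mcar;
  mone : mcar;
  mmulA : forall x y z, mmul x (mmul y z) = mmul (mmul x y) z;
  mmul1l : forall x, mmul mone x = x;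
  mmul1r : forall x, mmul x mone = x
}.
Arguments mmul {m} _ _.

Record monoid0 := Monoid0 {
  mon :> monoid;
  mzero : mon;
  mmul0l : forall x, @mmul mon mzero x = mzero;
  mmul0r : forall x, @mmul mon x mzero = mzero
}.

Definition finite_monoid (F : monoid) : Prop :=
  exists l : list F, forall x : F, In x l.

Definition submonoid (M : monoid) (S : M -> Prop) : Prop :=
  S (mone M) /\ (forall x y, S x -> S y -> S (mmul x y)).

(* A homomorphism from [S] is represented by a
   function on [M] whose values outside [S] are irrelevant. *)
Definition residually_finite_sub (M : monoid) (S : M -> Prop) : Prop :=
  forall s t, S s -> S t -> s <> t ->
    exists (F : monoid) (f : M -> F),
      finite_monoid F /\
      f (mone M) = mone F /\
      (forall x y, S x -> S y -> f (mmul x y) = mmul (f x) (f y)) /\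
      f s <> f t.

Definition residually_finite (M : monoid) : Prop :=
  forall s t : M, s <> t ->
    exists (F : monoid) (f : M -> F),
      finite_monoid F /\
      f (mone M) = mone F /\
      (forall x y, f (mmul x y) = mmul (f x) (f y)) /\
      f s <> f t.

Definition ideal (M : monoid) (I : M -> Prop) : Prop :=
  (exists x, I x) /\
  (forall x y, I x -> I (mmul x y)) /\
  (forall x y, I y -> I (mmul x y)).

Definition congruence_on (M : monoid) (I : M -> Prop) (rho : M -> M -> Prop)
  : Prop :=
  (forall s, I s -> rho s s) /\
  (forall s t, I s -> I t -> rho s t -> rho t s) /\
  (forall s t u, I s -> I t -> I u -> rho s t -> rho t u -> rho s u) /\
  (forall s t u, I s -> I t -> I u -> rho s t ->
      rho (mmul s u) (mmul t u) /\ rho (mmul u s) (mmul u t)).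

Definition finite_index (M : monoid) (I : M -> Prop) (rho : M -> M -> Prop)
  : Prop :=
  exists l : list M, (forall r, In r l -> I r) /\
    (forall s, I s -> exists r, In r l /\ rho s r).

Definition congruence (M : monoid) (R : M -> M -> Prop) : Prop :=
  (forall x, R x x) /\
  (forall x y, R x y -> R y x) /\
  (forall x y z, R x y -> R y z -> R x z) /\
  (forall x y u, R x y -> R (mmul x u) (mmul y u) /\ R (mmul u x) (mmul u y)).

Definition union_diag (M : monoid) (I : M -> Prop) (rho : M -> M -> Prop)
  : M -> M -> Prop :=
  fun x y => x = y \/ (I x /\ I y /\ rho x y).

Definition rf_compatible (M : monoid) (I : M -> Prop) : Prop :=
  forall s t, I s -> I t -> s <> t ->
    exists rho : M -> M -> Prop,
      congruence_on M I rho /\ finite_index M I rho /\ ~ rho s t /\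
      congruence M (union_diag M I rho).

Definition complement0 (M : monoid0) (I : M -> Prop) : M -> Prop :=
  fun x => ~ I x \/ x = mzero M.

From Stdlib Require Import List Classical ClassicalEpsilon.
From Stdlib Require Import FunctionalExtensionality PropExtensionality ProofIrrelevance.

(* If [s] and [t] are not both in [I], the Rees map (identity off [I], [0] on [I]) is a
   homomorphism [M -> N] separating them, so residual finiteness of [N] separates them.
   If both lie in [I], rf-compatibility gives a finite-index congruence [rho] on [I] with
   [rho ∪ Δ_M] a congruence of [M].  Extend [rho] to all of [M] by identifying elements
   that act alike on both sides of [I/rho] and lie in the same class of
   [(I/rho) ∪ {M \ I}], after collapsing every element that acts like [0].  This is a
   congruence of finite index, and its quotient is a finite monoid separating [s] and [t]. *)

Section FiniteIndex.
Context {X : Type}.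

Definition has_finite_index (R : X -> X -> Prop) : Prop :=
  exists l : list X, forall x, exists r, In r l /\ R x r.

Definition left_euclidean (R : X -> X -> Prop) : Prop :=
  forall x y z, R x z -> R y z -> R x y.

(* Picking one element for each realised key gives the representatives. *)
Lemma has_finite_index_of_keys {K : Type} (keys : list K) (key : X -> K -> Prop)
    (R : X -> X -> Prop) :
  (forall x, exists k, In k keys /\ key x k) ->
  (forall x y k, In k keys -> key x k -> key y k -> R x y) ->
  has_finite_index R.
Proof.
  intros Hkey Hsame.
  assert (Hreps : exists l, forall x k, In k keys -> key x k ->
                    exists r, In r l /\ R x r).
  { clear Hkey. induction keys as [|k keys IH].
    - exists nil. intros x k [].
    - destruct IH as [l Hl].
      { intros x y k' Hk'. apply Hsame. right. exact Hk'. }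
      destruct (classic (exists x0, key x0 k)) as [[x0 Hx0]|Hnone].
      + exists (x0 :: l). intros x k' [<-|Hk'] Hx.
        * exists x0. split; [left; reflexivity|].
          apply (Hsame x x0 k); [left; reflexivity|..]; assumption.
        * destruct (Hl x k' Hk' Hx) as [r [Hr Hxr]]. exists r. split; [right|]; assumption.
      + exists l. intros x k' [<-|Hk'] Hx; [exfalso; eauto|eauto]. }
  destruct Hreps as [l Hl]. exists l. intros x.
  destruct (Hkey x) as [k [Hk Hx]]. eauto.
Qed.

Lemma has_finite_index_weaken (R R' : X -> X -> Prop) :
  (forall x y, R x y -> R' x y) -> has_finite_index R -> has_finite_index R'.
Proof.
  intros HRR' [l Hl]. exists l. intros x.
  destruct (Hl x) as [r [Hr Hxr]]. eauto.
Qed.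

Lemma has_finite_index_and (R1 R2 : X -> X -> Prop) :
  left_euclidean R1 -> left_euclidean R2 ->
  has_finite_index R1 -> has_finite_index R2 ->
  has_finite_index (fun x y => R1 x y /\ R2 x y).
Proof.
  intros E1 E2 [l1 H1] [l2 H2].
  apply (has_finite_index_of_keys (list_prod l1 l2)
           (fun x k => R1 x (fst k) /\ R2 x (snd k))).
  - intros x. destruct (H1 x) as [r1 [Hr1 Hx1]], (H2 x) as [r2 [Hr2 Hx2]].
    exists (r1, r2). split; [apply in_prod|split]; assumption.
  - intros x y [r1 r2] _ [Hx1 Hx2] [Hy1 Hy2]. split; eauto.
Qed.

Lemma has_finite_index_preimages (Y : Type) (P : Y -> Prop) (R : Y -> Y -> Prop)
    (gs : list (X -> Y)) :
  (forall a b c, P a -> P b -> P c -> R a c -> R b c -> R a b) ->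
  (exists l, (forall q, In q l -> P q) /\ (forall y, P y -> exists q, In q l /\ R y q)) ->
  (forall g x, In g gs -> P (g x)) ->
  has_finite_index (fun x y => forall g, In g gs -> R (g x) (g y)).
Proof.
  intros Heucl [l [Hl Hcov]]. induction gs as [|g gs IH]; intros Hgs.
  - apply (has_finite_index_of_keys (tt :: nil) (fun _ _ => True)).
    + intros x. exists tt. split; [left|]; reflexivity.
    + intros x y _ _ _ _ g [].
  - assert (Hg : forall x, P (g x)) by (intros x; apply Hgs; left; reflexivity).
    assert (Hgs' : forall g' x, In g' gs -> P (g' x))
      by (intros g' x Hg'; apply Hgs; right; exact Hg').
    apply has_finite_index_weaken
      with (fun x y => R (g x) (g y) /\ forall g', In g' gs -> R (g' x) (g' y)).
    { intros x y [Hxy Hgsxy] g' [<-|Hg']; auto. }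
    apply has_finite_index_and.
    + intros x y w. apply Heucl; apply Hg.
    + intros x y w Hx Hy g' Hg'. apply (Heucl _ _ (g' w)); auto.
    + apply (has_finite_index_of_keys l (fun x q => R (g x) q)).
      * intros x. apply Hcov, Hg.
      * intros x y q Hq Hx Hy. apply (Heucl _ _ q); auto.
    + apply IH, Hgs'.
Qed.

End FiniteIndex.

Definition finitely_separated (M : monoid) (s t : M) : Prop :=
  exists (F : monoid) (f : M -> F),
    finite_monoid F /\ f (mone M) = mone F /\
    (forall x y, f (mmul x y) = mmul (f x) (f y)) /\ f s <> f t.

Lemma finite_quotient (M : monoid) (R : M -> M -> Prop) :
  congruence M R -> has_finite_index R ->
  exists (F : monoid) (f : M -> F),
    finite_monoid F /\ f (mone M) = mone F /\
    (forall x y, f (mmul x y) = mmul (f x) (f y)) /\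
    (forall x y, f x = f y -> R x y).
Proof.
  intros [Rrefl [Rsym [Rtrans Rmul]]] [l Hl].
  pose (Q := {P : M -> Prop | exists x, P = R x}).
  pose (cls (x : M) := exist (fun P => exists x, P = R x) (R x) (ex_intro _ x eq_refl) : Q).
  assert (cls_eq : forall x y, cls x = cls y <-> R x y).
  { intros x y. split.
    - intros E. apply (f_equal (@proj1_sig _ _)) in E. simpl in E.
      rewrite E. apply Rrefl.
    - intros Hxy. apply eq_sig_hprop; [intros; apply proof_irrelevance|]. simpl.
      apply functional_extensionality. intros w. apply propositional_extensionality.
      split; eauto. }
  assert (cls_surj : forall P : Q, exists x, P = cls x).
  { intros [P [x ->]]. exists x. apply eq_sig_hprop; [intros; apply proof_irrelevance|].
    reflexivity. }
  pose (rep (P : Q) := proj1_sig (constructive_indefinite_description _ (cls_surj P))).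
  assert (cls_rep : forall P, P = cls (rep P)).
  { intros P. unfold rep. destruct constructive_indefinite_description. assumption. }
  assert (rep_cls : forall x, R (rep (cls x)) x).
  { intros x. apply Rsym, cls_eq, cls_rep. }
  pose (mul (P1 P2 : Q) := cls (mmul (rep P1) (rep P2))).
  assert (mul_cls : forall x y, mul (cls x) (cls y) = cls (mmul x y)).
  { intros x y. apply cls_eq. apply Rtrans with (mmul x (rep (cls y))); apply Rmul, rep_cls. }
  assert (mulA : forall P1 P2 P3, mul P1 (mul P2 P3) = mul (mul P1 P2) P3).
  { intros P1 P2 P3. rewrite (cls_rep P1), (cls_rep P2), (cls_rep P3), !mul_cls, mmulA.
    reflexivity. }
  assert (mul1l : forall P, mul (cls (mone M)) P = P).
  { intros P. rewrite (cls_rep P), mul_cls, mmul1l. reflexivity. }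
  assert (mul1r : forall P, mul P (cls (mone M)) = P).
  { intros P. rewrite (cls_rep P), mul_cls, mmul1r. reflexivity. }
  exists (Monoid mul (cls (mone M)) mulA mul1l mul1r), cls.
  split; [|split; [|split]].
  - exists (map cls l). intros P. simpl in P. rewrite (cls_rep P).
    destruct (Hl (rep P)) as [r [Hr Hrep]].
    apply cls_eq in Hrep. rewrite Hrep. apply in_map, Hr.
  - reflexivity.
  - intros x y. symmetry. apply mul_cls.
  - intros x y. apply cls_eq.
Qed.

Section Ideal.
Variables (M : monoid0) (I : M -> Prop).
Hypothesis HI : ideal M I.
Hypothesis HN : submonoid M (complement0 M I).

Lemma ideal_mulr x y : I x -> I (mmul x y).
Proof. destruct HI as [_ [Hr _]]. apply Hr. Qed.

Lemma ideal_mull x y : I y -> I (mmul x y).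
Proof. destruct HI as [_ [_ Hl]]. apply Hl. Qed.

Lemma ideal_zero : I (mzero M).
Proof. destruct HI as [[x Hx] _]. rewrite <- (mmul0r M x). apply ideal_mulr, Hx. Qed.

Lemma complement0_mul {x y : M} : ~ I x -> ~ I y -> complement0 M I (mmul x y).
Proof. intros Hx Hy. apply HN; left; assumption. Qed.

Definition rees_map (x : M) : M :=
  if excluded_middle_informative (I x) then mzero M else x.

Lemma rees_map_complement0 x : complement0 M I (rees_map x).
Proof.
  unfold rees_map. destruct excluded_middle_informative; [right|left]; auto.
Qed.

Lemma rees_map_one : rees_map (mone M) = mone M.
Proof.
  unfold rees_map. destruct excluded_middle_informative as [H1|]; [|reflexivity].
  destruct (proj1 HN) as [Hn1| ->]; [contradiction|reflexivity].
Qed.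

Lemma rees_map_mul x y : rees_map (mmul x y) = mmul (rees_map x) (rees_map y).
Proof.
  unfold rees_map.
  destruct (excluded_middle_informative (I x)) as [Ix|nIx].
  - destruct excluded_middle_informative as [_|C]; [|exfalso; apply C, ideal_mulr, Ix].
    symmetry. apply mmul0l.
  - destruct (excluded_middle_informative (I y)) as [Iy|nIy].
    + destruct excluded_middle_informative as [_|C]; [|exfalso; apply C, ideal_mull, Iy].
      symmetry. apply mmul0r.
    + destruct excluded_middle_informative as [Ixy|]; [|reflexivity].
      destruct (complement0_mul nIx nIy) as [C|E]; [contradiction|exact (eq_sym E)].
Qed.

Lemma rees_map_neq s t : s <> t -> ~ (I s /\ I t) -> rees_map s <> rees_map t.
Proof.
  intros Hst Hnst. unfold rees_map.
  pose proof ideal_zero.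
  destruct (excluded_middle_informative (I s)), (excluded_middle_informative (I t));
    intros E; subst; tauto.
Qed.

Local Hint Resolve ideal_mulr ideal_mull ideal_zero : core.

Section ExtendedCongruence.
Variable rho : M -> M -> Prop.
Hypothesis Hrho : congruence_on M I rho.
Hypothesis Hdiag : congruence M (union_diag M I rho).
Hypothesis Hfin : finite_index M I rho.

Lemma rho_refl s : I s -> rho s s.
Proof. apply Hrho. Qed.

Lemma rho_sym s t : I s -> I t -> rho s t -> rho t s.
Proof. apply Hrho. Qed.

Lemma rho_trans s t u : I s -> I t -> I u -> rho s t -> rho t u -> rho s u.
Proof. apply Hrho. Qed.

Lemma rho_euclidean s t u : I s -> I t -> I u -> rho s u -> rho t u -> rho s t.
Proof. intros; apply (rho_trans s u t); auto using rho_sym. Qed.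

Lemma rho_mulr a b u : I a -> I b -> rho a b -> rho (mmul a u) (mmul b u).
Proof.
  intros Ia Ib Hab. destruct Hdiag as [_ [_ [_ Hmul]]].
  destruct (proj1 (Hmul a b u (or_intror (conj Ia (conj Ib Hab))))) as [<-|[_ [_ H]]];
    [apply rho_refl|]; auto.
Qed.

Lemma rho_mull a b u : I a -> I b -> rho a b -> rho (mmul u a) (mmul u b).
Proof.
  intros Ia Ib Hab. destruct Hdiag as [_ [_ [_ Hmul]]].
  destruct (proj2 (Hmul a b u (or_intror (conj Ia (conj Ib Hab))))) as [<-|[_ [_ H]]];
    [apply rho_refl|]; auto.
Qed.

Definition act_equiv (x y : M) : Prop :=
  forall k, I k -> rho (mmul x k) (mmul y k) /\ rho (mmul k x) (mmul k y).

Definition same_class (x y : M) : Prop := (I x <-> I y) /\ (I x -> rho x y).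

Definition zero_like (x : M) : Prop :=
  act_equiv x (mzero M) /\ (I x -> rho x (mzero M)).

(* Collapsing the elements that act like [0] is needed because a product of two
   elements outside [I] may be [0]. *)
Definition rho_ext (x y : M) : Prop :=
  (zero_like x /\ zero_like y) \/ (act_equiv x y /\ same_class x y).

Lemma act_equiv_refl x : act_equiv x x.
Proof. intros k Hk. split; apply rho_refl; auto. Qed.

Lemma act_equiv_sym x y : act_equiv x y -> act_equiv y x.
Proof. intros H k Hk. destruct (H k Hk). split; apply rho_sym; auto. Qed.

Lemma act_equiv_trans x y w : act_equiv x y -> act_equiv y w -> act_equiv x w.
Proof.
  intros Hxy Hyw k Hk. destruct (Hxy k Hk), (Hyw k Hk).
  split; [apply (rho_trans _ (mmul y k))|apply (rho_trans _ (mmul k y))]; auto.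
Qed.

Lemma act_equiv_mulr x y u : act_equiv x y -> act_equiv (mmul x u) (mmul y u).
Proof.
  intros H k Hk. split.
  - rewrite <- !mmulA. apply H. auto.
  - rewrite !mmulA. apply rho_mulr; auto. apply H, Hk.
Qed.

Lemma act_equiv_mull x y u : act_equiv x y -> act_equiv (mmul u x) (mmul u y).
Proof.
  intros H k Hk. split.
  - rewrite <- !mmulA. apply rho_mull; auto. apply H, Hk.
  - rewrite !mmulA. apply H. auto.
Qed.

Lemma same_class_refl x : same_class x x.
Proof. split; [tauto|apply rho_refl]. Qed.

Lemma same_class_sym x y : same_class x y -> same_class y x.
Proof. intros [Hxy Hr]. split; [tauto|]. intros Iy. apply rho_sym; tauto. Qed.

Lemma same_class_trans x y w : same_class x y -> same_class y w -> same_class x w.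
Proof.
  intros [Hxy Hr] [Hyw Hr']. split; [tauto|].
  intros Ix. apply (rho_trans _ y); tauto.
Qed.

Lemma same_class_in_ideal x y : I x -> I y -> rho x y -> same_class x y.
Proof. intros Ix Iy Hxy. split; tauto. Qed.

Lemma zero_like_zero : zero_like (mzero M).
Proof. split; [apply act_equiv_refl|intros; apply rho_refl; auto]. Qed.

Lemma zero_like_mulr x u : zero_like x -> zero_like (mmul x u).
Proof.
  intros [Hact Hx]. split; [rewrite <- (mmul0l M u); apply act_equiv_mulr, Hact|].
  intros Hxu. destruct (classic (I x)) as [Ix|nIx];
    [rewrite <- (mmul0l M u); apply rho_mulr; auto|].
  destruct (classic (I u)) as [Iu|nIu]; [rewrite <- (mmul0l M u); apply Hact, Iu|].
  destruct (complement0_mul nIx nIu) as [C| ->]; [contradiction|].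
  apply rho_refl; auto.
Qed.

Lemma zero_like_mull x u : zero_like x -> zero_like (mmul u x).
Proof.
  intros [Hact Hx]. split; [rewrite <- (mmul0r M u); apply act_equiv_mull, Hact|].
  intros Hxu. destruct (classic (I x)) as [Ix|nIx];
    [rewrite <- (mmul0r M u); apply rho_mull; auto|].
  destruct (classic (I u)) as [Iu|nIu]; [rewrite <- (mmul0r M u); apply Hact, Iu|].
  destruct (complement0_mul nIu nIx) as [C| ->]; [contradiction|].
  apply rho_refl; auto.
Qed.

Lemma zero_like_act_equiv x y :
  act_equiv x y -> (I y -> I x /\ rho x y) -> zero_like x -> zero_like y.
Proof.
  intros Hxy Hin [Hact Hx]. split.
  - apply (act_equiv_trans _ x); [apply act_equiv_sym|]; assumption.
  - intros Iy. destruct (Hin Iy) as [Ix Hrxy].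
    apply (rho_trans _ x); auto using rho_sym.
Qed.

Lemma zero_like_same x y : act_equiv x y -> same_class x y -> zero_like x -> zero_like y.
Proof. intros Hxy [Hin Hr]. apply zero_like_act_equiv; [assumption|tauto]. Qed.

Lemma rho_ext_complement0 x y :
  act_equiv x y -> complement0 M I x -> complement0 M I y -> rho_ext x y.
Proof.
  intros Hxy [nIx| ->] [nIy| ->].
  - right. split; [assumption|split; tauto].
  - left. split; [split; [assumption|tauto]|apply zero_like_zero].
  - left. split; [apply zero_like_zero|].
    apply (zero_like_act_equiv (mzero M)); [assumption|tauto|apply zero_like_zero].
  - right. split; [assumption|apply same_class_refl].
Qed.

Lemma rho_ext_mulr x y u : rho_ext x y -> rho_ext (mmul x u) (mmul y u).
Proof.
  intros [[Zx Zy]|[Hact [Hin Hxy]]]; [left; split; apply zero_like_mulr; assumption|].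
  destruct (classic (I x)) as [Ix|nIx].
  - assert (Iy : I y) by tauto.
    right. split; [apply act_equiv_mulr, Hact|].
    apply same_class_in_ideal; auto. apply rho_mulr; auto.
  - destruct (classic (I u)) as [Iu|nIu].
    + right. split; [apply act_equiv_mulr, Hact|].
      apply same_class_in_ideal; auto. apply Hact, Iu.
    + apply rho_ext_complement0; [apply act_equiv_mulr, Hact|..];
        apply complement0_mul; tauto.
Qed.

Lemma rho_ext_mull x y u : rho_ext x y -> rho_ext (mmul u x) (mmul u y).
Proof.
  intros [[Zx Zy]|[Hact [Hin Hxy]]]; [left; split; apply zero_like_mull; assumption|].
  destruct (classic (I x)) as [Ix|nIx].
  - assert (Iy : I y) by tauto.
    right. split; [apply act_equiv_mull, Hact|].
    apply same_class_in_ideal; auto. apply rho_mull; auto.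
  - destruct (classic (I u)) as [Iu|nIu].
    + right. split; [apply act_equiv_mull, Hact|].
      apply same_class_in_ideal; auto. apply Hact, Iu.
    + apply rho_ext_complement0; [apply act_equiv_mull, Hact|..];
        apply complement0_mul; tauto.
Qed.

Lemma rho_ext_congruence : congruence M rho_ext.
Proof.
  split; [|split; [|split]].
  - intros x. right. split; [apply act_equiv_refl|apply same_class_refl].
  - intros x y [[Zx Zy]|[Hact Hcl]]; [left|right]; split;
      auto using act_equiv_sym, same_class_sym.
  - intros x y w [[Zx Zy]|[Hxy Cxy]] [[Zy' Zw]|[Hyw Cyw]].
    + left. split; assumption.
    + left. split; [|apply (zero_like_same y)]; assumption.
    + left. split; [apply (zero_like_same y)|];
        auto using act_equiv_sym, same_class_sym.
    + right. split; [apply (act_equiv_trans _ y)|apply (same_class_trans _ y)]; assumption.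
  - intros x y u Hxy. split; [apply rho_ext_mulr|apply rho_ext_mull]; assumption.
Qed.

Lemma rho_ext_in_ideal s t : I s -> I t -> rho_ext s t -> rho s t.
Proof.
  intros Is It [[[_ Hs] [_ Ht]]|[_ [_ Hst]]]; [|auto].
  apply (rho_euclidean _ _ (mzero M)); auto.
Qed.

(* By compatibility of [rho ∪ Δ_M], acting alike on representatives of the
   [rho]-classes is acting alike on all of [I]. *)
Lemma act_equiv_of_reps (l : list M) x y :
  (forall r, In r l -> I r) -> (forall s, I s -> exists r, In r l /\ rho s r) ->
  (forall r, In r l -> rho (mmul x r) (mmul y r) /\ rho (mmul r x) (mmul r y)) ->
  act_equiv x y.
Proof.
  intros Hl Hcov Hxy k Ik. destruct (Hcov k Ik) as [r [Hr Hkr]].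
  assert (Ir := Hl r Hr). destruct (Hxy r Hr) as [Hright Hleft].
  split.
  - apply (rho_trans _ (mmul x r)); auto; [apply rho_mull; auto|].
    apply (rho_trans _ (mmul y r)); auto. apply rho_mull; auto using rho_sym.
  - apply (rho_trans _ (mmul r x)); auto; [apply rho_mulr; auto|].
    apply (rho_trans _ (mmul r y)); auto. apply rho_mulr; auto using rho_sym.
Qed.

Lemma same_class_finite_index : has_finite_index same_class.
Proof.
  destruct Hfin as [l [Hl Hcov]].
  apply (has_finite_index_of_keys (None :: map Some l)
           (fun x k => match k with None => ~ I x | Some r => I x /\ rho x r end)).
  - intros x. destruct (classic (I x)) as [Ix|nIx].
    + destruct (Hcov x Ix) as [r [Hr Hxr]].
      exists (Some r). split; [right; apply in_map, Hr|split; assumption].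
    + exists None. split; [left; reflexivity|assumption].
  - intros x y [r|] Hk Hx Hy; [|split; tauto].
    destruct Hk as [C|Hk]; [discriminate|].
    apply in_map_iff in Hk as [r' [[= ->] Hr]].
    destruct Hx as [Ix Hxr], Hy as [Iy Hyr].
    apply same_class_in_ideal; auto. apply (rho_euclidean _ _ r); auto.
Qed.

Lemma rho_ext_finite_index : has_finite_index rho_ext.
Proof.
  destruct Hfin as [l [Hl Hcov]].
  pose (gs := map (fun r x => mmul x r) l ++ map (fun r x => mmul r x) l).
  assert (Hgs : forall g x, In g gs -> I (g x)).
  { intros g x Hg. apply in_app_or in Hg as [Hg|Hg];
      apply in_map_iff in Hg as [r [<- Hr]]; auto. }
  apply has_finite_index_weaken
    with (fun x y => (forall g, In g gs -> rho (g x) (g y)) /\ same_class x y).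
  { intros x y [Hg Hc]. right. split; [|assumption].
    apply (act_equiv_of_reps l); auto.
    intros r Hr. split.
    - apply (Hg (fun z => mmul z r)), in_or_app. left.
      apply (in_map (fun r z => mmul z r)), Hr.
    - apply (Hg (fun z => mmul r z)), in_or_app. right.
      apply (in_map (fun r z => mmul r z)), Hr. }
  apply has_finite_index_and.
  - intros x y w Hx Hy g Hg. apply (rho_euclidean _ _ (g w)); auto.
  - intros x y w Hx Hy. apply (same_class_trans _ w); [|apply same_class_sym]; assumption.
  - apply (@has_finite_index_preimages _ _ I rho gs rho_euclidean); [|exact Hgs].
    exists l. split; assumption.
  - exact same_class_finite_index.
Qed.

End ExtendedCongruence.

Lemma separated_in_ideal s t :
  rf_compatible M I -> I s -> I t -> s <> t -> finitely_separated M s t.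
Proof.
  intros Hrf Is It Hst.
  destruct (Hrf s t Is It Hst) as [rho [Hrho [Hfin [Hnst Hdiag]]]].
  destruct (finite_quotient _ _ (rho_ext_congruence rho Hrho Hdiag)
              (rho_ext_finite_index rho Hrho Hdiag Hfin)) as [F [f [HF [H1 [Hmul Hker]]]]].
  exists F, f. split; [|split; [|split]]; try assumption.
  intros E. apply Hnst, (rho_ext_in_ideal rho Hrho); auto.
Qed.

Lemma separated_off_ideal s t :
  residually_finite_sub M (complement0 M I) -> ~ (I s /\ I t) -> s <> t ->
  finitely_separated M s t.
Proof.
  intros Hsub Hnst Hst.
  destruct (Hsub (rees_map s) (rees_map t) (rees_map_complement0 s) (rees_map_complement0 t)
              (rees_map_neq s t Hst Hnst)) as [F [g [HF [G1 [Gmul Gst]]]]].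
  exists F, (fun x => g (rees_map x)). split; [|split; [|split]].
  - exact HF.
  - simpl. rewrite rees_map_one. exact G1.
  - intros x y. simpl. rewrite rees_map_mul. apply Gmul; apply rees_map_complement0.
  - exact Gst.
Qed.

End Ideal.

Theorem mainTheorem10 (M : monoid0) (I : M -> Prop) :
  ideal M I -> rf_compatible M I -> submonoid M (complement0 M I) ->
  (residually_finite M <-> residually_finite_sub M (complement0 M I)).
Proof.
  intros HI Hrf HN. split.
  - intros HM s t _ _ Hst.
    destruct (HM s t Hst) as [F [f [HF [H1 [Hmul Hft]]]]].
    exists F, f. split; [|split; [|split]]; auto.
  - intros Hsub s t Hst. destruct (classic (I s /\ I t)) as [[Is It]|Hnst].
    + apply (separated_in_ideal M I HI HN); assumption.
    + apply (separated_off_ideal M I HI HN); assumption.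
Qed.
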